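(* Let $G=\langle N,S,P\rangle$ and $G'=\langle N',S',P'\rangle$ be normal-form games with $G\sqsubseteq G'$. Let $i\in N$, and let $\sigma,\sigma'$ be mixed strategy profiles of $G,G'$ respectively with $\sigma\sim\sigma'$. Then $h_i(\sigma)=h'_i(\sigma')$, where $h_i,h'_i$ are the payoff functions of player $i$ in $G,G'$.
   Context: A normal-form game $G=\langle N,S,P\rangle$ has a finite set of players $N$, for each $i\in N$ a finite set of pure strategies $S_i$, $S=\times_{i\in N}S_i$, and payoffs $P_i:S\to\mathbb{R}$. A mixed strategy profile $\sigma=(\sigma_i)_{i\in N}$ assigns to each $i$ a probability distribution $\sigma_i=(\sigma_{ij})_{j\in S_i}$ on $S_i$; the payoff of $i$ is $h_i(\sigma)=\sum_{s\in S}P_i(s)\prod_{k\in N}\sigma_{k,s_k}$. $NE(G)$ is the set of mixed Nash equilibria. For games $G=\langle N,S,P\rangle$, $G'=\langle N',S',P'\rangle$ and profiles $\sigma$ of $G$, $\sigma'$ of $G'$, $\sigma\sim\sigma'$ (compatible) iff $\sigma_{ij}=\sigma'_{ij}$ for all $i\in N\cap N'$ and $j\in S_i\cap S'_i$. $G'$ is an inflated version of $G$, written $G\sqsubseteq G'$, iff: $N\subseteq N'$; $S_i\subseteq S'_i$ for all $i\in N$; $P_i(s)=P'_i(s')$ whenever $i\in N$, $s\in S$, $s'\in S'$ and $s_j=s'_j$ for all $j\in N$; for every $\sigma\in NE(G)$ there is $\sigma'\in NE(G')$ with $\sigma\sim\sigma'$; and for every $\sigma'\in NE(G')$ there is $\sigma\in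 NE(G)$ with $\sigma\sim\sigma'$. *)

From HB Require Import structures.
From mathcomp Require Import all_boot all_order all_algebra.
Set Implicit Arguments. Unset Strict Implicit. Unset Printing Implicit Defensive.
Import Order.TTheory GRing.Theory Num.Theory.
Local Open Scope ring_scope.

(* Ambient universes: a finite type [I] of potential players, and for each
   player a finite type [A i] of potential pure strategies.  A game picks a
   finite set of players [N] and strategy sets [S i]; this lets us speak of
   N ⊆ N', S_i ⊆ S'_i and of compatibility of profiles of different games. *)
Section Games.
Variables (R : realFieldType) (I : finType) (A : I -> finType).

Definition pprofile (N : {set I}) (S : forall i, {set A i}) :=
  {dffun forall k : {k : I | k \in N}, {x : A (val k) | x \in S (val k)}}.

Record game := Game {
  players : {set I};
  strats : forall i, {set A i};
  (* payoff i s = P_i(s); only meaningful for i in players *)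
  payoff : I -> pprofile players strats -> R }.
Arguments payoff : clear implicits.
Arguments players : clear implicits.
Arguments strats : clear implicits.

(* a (candidate) mixed profile: sigma i j = sigma_{ij}; only the values for
   i in N and j in S_i are meaningful *)
Definition mprofile := forall i, A i -> R.

Definition is_mixed (G : game) (sigma : mprofile) : Prop :=
  forall i, i \in players G ->
    (forall j, j \in strats G i -> 0 <= sigma i j) /\
    \sum_(j in strats G i) sigma i j = 1.

Definition exp_payoff (G : game) (i : I) (sigma : mprofile) : R :=
  \sum_(s : pprofile (players G) (strats G))
     payoff G i s * \prod_(k : {k : I | k \in players G}) sigma (val k) (val (s k)).

Definition is_NE (G : game) (sigma : mprofile) : Prop :=
  is_mixed G sigma /\
  forall i, i \in players G -> forall tau : mprofile, is_mixed G tau ->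
    (forall k, k != i -> tau k = sigma k) ->
    exp_payoff G i tau <= exp_payoff G i sigma.

Definition compatible (G G' : game) (sigma sigma' : mprofile) : Prop :=
  forall i, i \in players G -> i \in players G' ->
  forall j, j \in strats G i -> j \in strats G' i -> sigma i j = sigma' i j.

Definition inflated (G G' : game) : Prop :=
  [/\ players G \subset players G',
      (forall i, i \in players G -> strats G i \subset strats G' i),
      (forall i, i \in players G ->
        forall (s : pprofile (players G) (strats G))
               (s' : pprofile (players G') (strats G')),
        (forall (j : I) (hj : j \in players G) (hj' : j \in players G'),
            val (s (exist _ j hj)) = val (s' (exist _ j hj'))) ->
        payoff G i s = payoff G' i s'),
      (forall sigma, is_NE G sigma ->
         exists2 sigma', is_NE G' sigma' & compatible G G' sigma sigma') &
      (forall sigma', is_NE G' sigma' ->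
         exists2 sigma, is_NE G sigma & compatible G G' sigma sigma')].

End Games.

From HB Require Import structures.
From mathcomp Require Import all_boot all_order all_algebra.
Set Implicit Arguments. Unset Strict Implicit. Unset Printing Implicit Defensive.
Import Order.TTheory GRing.Theory Num.Theory.
Local Open Scope ring_scope.

(* Compatibility forces sigma' to put all the mass of a player k of G on S_k,
   so the profiles s' of G' with positive weight are exactly the extensions of
   profiles s of G, and for them P'_i(s') = P_i(s).  The total weight of the
   extensions of s factorises over the players of G': a player of G contributes
   sigma_k(s_k), any other player its total mass 1. *)

Lemma bigA_distr_dffun (R : comPzSemiRingType) (K : finType) (B : K -> finType)
    (F : forall k, B k -> R) :
  \prod_k \sum_(x : B k) F k x = \sum_(g : {dffun forall k, B k}) \prod_k F k (g k).
Proof.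
have -> : \prod_k \sum_(x : B k) F k x =
    \prod_k \sum_(j in tagged_with B k) untag 0 [ffun x => F k x] j.
  apply: eq_bigr => k _.
  rewrite -(big_tag (fun k => [ffun x => F k x] : B k -> R)).
  by apply: eq_bigr => x _; rewrite ffunE.
rewrite bigA_distr_big_dep -(big_fprod _ _ (fun k => [ffun x => F k x])).
rewrite (reindex (@fprod_of_dffun K B)); last exact/onW_bij/fprod_of_dffun_bij.
by apply: eq_bigr => g _; apply: eq_bigr => k _; rewrite ffunE fprodE.
Qed.

Lemma psumr_subset_eq0 (R : numDomainType) (T : finType) (P Q : {pred T})
    (w : T -> R) :
  {subset P <= Q} -> (forall x, x \in Q -> 0 <= w x) ->
  \sum_(x in P) w x = \sum_(x in Q) w x ->
  forall x, x \in Q -> x \notin P -> w x = 0.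
Proof.
move=> sPQ w_ge0 eq_sum x Qx Px.
have sum_out : \sum_(y in Q | y \notin P) w y = 0.
  move: eq_sum; rewrite (bigID (mem P) (mem Q)) /=.
  have -> : \sum_(y in Q | y \in P) w y = \sum_(y in P) w y.
    by apply: eq_bigl => y; rewrite andb_idl // => /sPQ.
  by rewrite -[X in X = _]addr0 => /addrI <-.
by apply: (psumr_eq0P _ sum_out) => [y /andP[/w_ge0]|]; rewrite ?Qx ?Px.
Qed.

Definition weight (R : realFieldType) (I : finType) (A : I -> finType)
    (G : game R A) (sigma : mprofile R A) (s : pprofile (players G) (strats G)) : R :=
  \prod_(k : {k : I | k \in players G}) sigma (val k) (val (s k)).
Arguments weight {R I A} G sigma s.

Lemma exp_payoffE (R : realFieldType) (I : finType) (A : I -> finType)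
    (G : game R A) (i : I) (sigma : mprofile R A) :
  exp_payoff G i sigma =
  \sum_(s : pprofile (players G) (strats G)) payoff i s * weight G sigma s.
Proof. by []. Qed.

Section Inflation.
Variables (R : realFieldType) (I : finType) (A : I -> finType) (G G' : game R A).

Local Notation profile := (pprofile (players G) (strats G)).
Local Notation profile' := (pprofile (players G') (strats G')).

Hypothesis subN : players G \subset players G'.
Hypothesis subS : forall i, i \in players G -> strats G i \subset strats G' i.
Hypothesis payE : forall i, i \in players G -> forall (s : profile) (s' : profile'),
  (forall j (hj : j \in players G) (hj' : j \in players G'),
     val (s (exist _ j hj)) = val (s' (exist _ j hj'))) ->
  payoff i s = payoff i s'.

(* [x : A j] and [val (s k) : A (val k)] live in types that are only
   propositionally equal, hence the comparison of tagged values. *)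
Definition agrees_at (s : profile) (j : I) (x : A j) : bool :=
  if insub j is Some k then Tagged A x == Tagged A (val (s k)) else true.

Definition agree (s : profile) (s' : profile') : bool :=
  [forall k, agrees_at s (val (s' k))].

Lemma agrees_atE s j (hj : j \in players G) (x : A j) :
  agrees_at s x = (x == val (s (exist _ j hj))).
Proof. by rewrite /agrees_at (insubT (fun k => k \in players G) hj) eq_Tagged. Qed.

Lemma agrees_atN s j (x : A j) : j \notin players G -> agrees_at s x.
Proof. by move=> jN; rewrite /agrees_at insubN. Qed.

Lemma agreeP s s' : agree s s' ->
  forall j (hj : j \in players G) (hj' : j \in players G'),
  val (s (exist _ j hj)) = val (s' (exist _ j hj')).
Proof.
move=> /forallP ag j hj hj'.
by have := ag (exist _ j hj'); rewrite agrees_atE => /eqP.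
Qed.

Lemma agree_inj s1 s2 s' : agree s1 s' -> agree s2 s' -> s1 = s2.
Proof.
move=> ag1 ag2; apply/ffunP => -[j hj]; apply: val_inj.
have hj' := subsetP subN j hj.
by rewrite (agreeP ag1 hj hj') (agreeP ag2 hj hj').
Qed.

Lemma agree_exists (s' : profile') :
  (forall k, val k \in players G -> val (s' k) \in strats G (val k)) ->
  exists s, agree s s'.
Proof.
move=> s'S; pose widen (k : {k | k \in players G}) : {k | k \in players G'} :=
  exist _ (val k) (subsetP subN _ (valP k)).
exists (finfun (fun k : {k | k \in players G} =>
  exist (fun x => x \in strats G (val k)) (val (s' (widen k))) (s'S (widen k) (valP k)))).
apply/forallP => -[j hj'] /=; case: (boolP (j \in players G)) => [hj|/agrees_atN //].
rewrite (agrees_atE _ hj) ffunE /=.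
by rewrite /widen (bool_irrelevance (subsetP subN j _) hj').
Qed.

Variables (sigma sigma' : mprofile R A).
Arguments sigma : clear implicits.
Arguments sigma' : clear implicits.
Hypothesis mix : is_mixed G sigma.
Hypothesis mix' : is_mixed G' sigma'.
Hypothesis comp : compatible G G' sigma sigma'.

Lemma mixed_eq0_outside j x :
  j \in players G -> x \in strats G' j -> x \notin strats G j -> sigma' j x = 0.
Proof.
move=> jN; have jN' := subsetP subN j jN.
apply: (psumr_subset_eq0 (subsetP (subS jN)) (proj1 (mix' jN'))).
rewrite (proj2 (mix' jN')) -(proj2 (mix jN)).
by apply: eq_bigr => y yS; rewrite comp // (subsetP (subS jN)).
Qed.

Lemma weight_eq0_disagree (s' : profile') :
  (forall s, ~~ agree s s') -> weight G' sigma' s' = 0.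
Proof.
move=> disagree.
have [s'S|] := boolP [forall k, (val k \in players G) ==> (val (s' k) \in strats G (val k))].
  have [s ag] := agree_exists (fun k => implyP (forallP s'S k)).
  by have := disagree s; rewrite ag.
rewrite negb_forall => /existsP[k]; rewrite negb_imply => /andP[kN ks].
by rewrite /weight (bigD1 k) //= (mixed_eq0_outside kN (valP (s' k)) ks) mul0r.
Qed.

Lemma payoff_weight_agree i (s' : profile') : i \in players G ->
  payoff i s' * weight G' sigma' s' =
  \sum_(s : profile) payoff i s * (weight G' sigma' s' * (agree s s')%:R).
Proof.
move=> iN; have [s ag|disagree] := pickP (fun s => agree s s').
  rewrite (bigD1 s) //= ag mulr1 big1 ?addr0 => [|t ts].
    by rewrite (payE iN (agreeP ag)).
  have [agt|] := boolP (agree t s'); last by rewrite !mulr0.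
  by rewrite (agree_inj agt ag) eqxx in ts.
rewrite weight_eq0_disagree => [|s]; last by rewrite disagree.
by rewrite mulr0 big1 // => s _; rewrite mul0r mulr0.
Qed.

Lemma sum_agrees_at_in (s : profile) j (hj : j \in players G) :
  \sum_(x in strats G' j) sigma' j x * (agrees_at s x)%:R =
  sigma j (val (s (exist _ j hj))).
Proof.
set y := val (s (exist _ j hj)).
have yS : y \in strats G j := valP _.
have yS' : y \in strats G' j := subsetP (subS hj) _ yS.
rewrite (bigD1 y) //= (agrees_atE _ hj) eqxx mulr1 big1 ?addr0 => [|x /andP[_ xy]].
  by rewrite comp // (subsetP subN).
by rewrite (agrees_atE _ hj) (negbTE xy) mulr0.
Qed.

Lemma sum_agrees_at_out (s : profile) j : j \in players G' -> j \notin players G ->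
  \sum_(x in strats G' j) sigma' j x * (agrees_at s x)%:R = 1.
Proof.
move=> jN' jN; rewrite -[RHS](proj2 (mix' jN')).
by apply: eq_bigr => x _; rewrite agrees_atN ?mulr1.
Qed.

Lemma sum_weight_agree (s : profile) :
  \sum_(s' : profile') weight G' sigma' s' * (agree s s')%:R = weight G sigma s.
Proof.
have agreeE (s' : profile') :
    (agree s s')%:R = \prod_k (agrees_at s (val (s' k)))%:R :> R.
  have [/forallP ag|] := boolP (agree s s'); first by rewrite big1 // => k _; rewrite ag.
  by rewrite negb_forall => /existsP[k /negbTE nag]; rewrite (bigD1 k) //= nag mul0r.
under eq_bigr do rewrite agreeE -big_split /=.
rewrite -(bigA_distr_dffun (fun k (x : {x | x \in strats G' (val k)}) =>
  sigma' (val k) (val x) * (agrees_at s (val x))%:R)).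
pose F j := \sum_(x in strats G' j) sigma' j x * (agrees_at s x)%:R.
under eq_bigr do rewrite -(big_sub _ (fun x => sigma' _ x * (agrees_at s x)%:R)) -/(F _).
rewrite -(big_sub _ F) (bigID (mem (players G))) /=.
rewrite [X in _ * X]big1 ?mulr1 => [|j /andP[jN' jN]]; last exact: sum_agrees_at_out.
rewrite (eq_bigl (mem (players G))) => [|j]; last exact/andb_idl/(subsetP subN).
by rewrite big_sub; apply: eq_bigr => -[j hj] _; exact: sum_agrees_at_in.
Qed.

End Inflation.

Theorem proposition1 (R : realFieldType) (I : finType) (A : I -> finType)
    (G G' : game R A) (i : I) (sigma sigma' : mprofile R A) :
  inflated G G' -> i \in players G ->
  is_mixed G sigma -> is_mixed G' sigma' -> compatible G G' sigma sigma' ->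
  exp_payoff G i sigma = exp_payoff G' i sigma'.
Proof.
case=> subN subS payE _ _ iN mix mix' comp.
rewrite !exp_payoffE.
under [RHS]eq_bigr do rewrite (payoff_weight_agree subN subS payE mix mix' comp _ iN).
rewrite exchange_big; apply: eq_bigr => s _.
by rewrite -mulr_sumr (sum_weight_agree subN subS mix' comp).
Qed.
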